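(* Let $\mu>1$ be a real number and $N\ge 1$ an integer. Let $a(1),a(2),\dots$ be a sequence of real numbers such that $a(n+m)\le a(n)+a(m)$ holds for all integers $n,m$ with $N\le n\le m\le \mu n$. Then $\lim_{n\to\infty} a(n)/n$ exists (possibly $-\infty$) and equals $\inf_{k\ge N} a(k)/k$. *)

From Stdlib Require Import Reals Lra Lia.
Open Scope R_scope.

Definition is_inf_ratio (a : nat -> R) (N : nat) (L : R) : Prop :=
  (forall k : nat, (N <= k)%nat -> L <= a k / INR k) /\
  (forall l : R, (forall k : nat, (N <= k)%nat -> l <= a k / INR k) -> l <= L).

Definition inf_ratio_minus_infty (a : nat -> R) (N : nat) : Prop :=
  forall l : R, exists k : nat, (N <= k)%nat /\ a k / INR k < l.

From Stdlib Require Import Reals Lra Lia Classical.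
Open Scope R_scope.

(* Fix k >= N and let alpha = a(k)/k. Doubling gives a(2^s k) <= 2^s a(k), so alpha is attained
   along the numbers 2^s k. If a(m) <= beta m holds for all large m, then any large n lies in
   [2^J T, 2^(J+1) T) for some T = 2^s k, and n is reached from T by J near-doublings, each
   adding a summand y with g <= y <= mu g; this gives a(n) <= alpha T + beta (n - T)
   <= (alpha + (beta - alpha)(1 - 2^-(J+1))) n. Starting from a crude linear bound and iterating
   this contraction yields limsup a(n)/n <= alpha, hence lim a(n)/n = inf_(k >= N) a(k)/k. *)

Lemma exists_nat_mul_ge (x c : R) : 0 < c -> exists K : nat, (1 <= K)%nat /\ x <= INR K * c.
Proof.
  intro hc. destruct (INR_unbounded (x / c)) as [n hn].
  assert (hxn : x < INR n * c).
  { apply (Rmult_lt_compat_r c) in hn; [|lra].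
    unfold Rdiv in hn. rewrite Rmult_assoc, Rinv_l in hn; lra. }
  exists (S n). split; [lia|]. rewrite S_INR. nra.
Qed.

Lemma bounded_on_initial_segment (f : nat -> R) (M : nat) :
  exists C, 0 <= C /\ forall j, (j <= M)%nat -> f j <= C.
Proof.
  induction M as [|M [C [hC0 hC]]].
  - exists (Rmax 0 (f 0%nat)). split; [apply Rmax_l|].
    intros j hj. replace j with 0%nat by lia. apply Rmax_r.
  - pose proof (Rmax_l C (f (S M))) as hmax.
    exists (Rmax C (f (S M))). split; [lra|].
    intros j hj. destruct (Nat.eq_dec j (S M)) as [->|hne]; [apply Rmax_r|].
    specialize (hC j ltac:(lia)). lra.
Qed.

Lemma pow2_bracket (m0 n : nat) :
  (1 <= m0)%nat -> (m0 <= n)%nat -> exists s, (2^s * m0 <= n < 2 * (2^s * m0))%nat.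
Proof.
  intro hm0. induction n as [n IH] using (well_founded_induction Wf_nat.lt_wf). intro hn.
  destruct (Nat.lt_ge_cases n (2 * m0)) as [hlt|hge].
  - exists 0%nat. simpl. lia.
  - destruct (IH (n / 2)%nat) as [s hs].
    + apply Nat.div_lt; lia.
    + apply Nat.div_le_lower_bound; lia.
    + exists (S s). pose proof (Nat.div_mod n 2). pose proof (Nat.mod_upper_bound n 2).
      rewrite Nat.pow_succ_r'. nia.
Qed.

Lemma INR_pow2_mul (u k : nat) : INR (2^u * k) = 2^u * INR k.
Proof. rewrite mult_INR, pow_INR. reflexivity. Qed.

(* The path T = g 0, ..., g J = 2^J T + D: doubling at each step while spreading D linearly,
   so that every step adds only O(g/J + 1) beyond a doubling. *)
Definition interpolating_path (T D J q : nat) : nat := (2^q * T + D * q / (J * 2^(J - q)))%nat.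

Lemma interpolating_path_0 (T D J : nat) : interpolating_path T D J 0 = T.
Proof. unfold interpolating_path. rewrite Nat.mul_0_r, Nat.Div0.div_0_l. simpl. lia. Qed.

Lemma interpolating_path_last (T D J : nat) :
  (1 <= J)%nat -> interpolating_path T D J J = (2^J * T + D)%nat.
Proof.
  intro hJ. unfold interpolating_path. rewrite Nat.sub_diag. simpl (2^0)%nat.
  rewrite Nat.mul_1_r, Nat.div_mul by lia. reflexivity.
Qed.

Lemma interpolating_path_ge (T D J q : nat) : (2^q * T <= interpolating_path T D J q)%nat.
Proof. unfold interpolating_path. lia. Qed.

Lemma interpolating_path_step (T D J q : nat) :
  (q < J)%nat -> (D < 2^J * T)%nat ->
  (2 * interpolating_path T D J q <= interpolating_path T D J (S q))%nat /\
  (J * interpolating_path T D J (S q) <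
     2 * J * interpolating_path T D J q + 2 * J + 2 * interpolating_path T D J q)%nat.
Proof.
  intros hq hD. set (g := interpolating_path T D J).
  set (Q := (J * 2^(J - S q))%nat).
  assert (hQ1 : (1 <= Q)%nat).
  { pose proof (Nat.pow_nonzero 2 (J - S q) ltac:(lia)). unfold Q. nia. }
  assert (hQ2 : (J * 2^(J - q) = 2 * Q)%nat).
  { unfold Q. replace (J - q)%nat with (S (J - S q)) by lia. rewrite Nat.pow_succ_r'. ring. }
  set (B := (2^q * T)%nat).
  assert (hJB : (J * (2^J * T) = 2 * B * Q)%nat).
  { unfold B, Q. replace J with (S q + (J - S q))%nat at 2 by lia.
    rewrite Nat.pow_add_r, Nat.pow_succ_r'. ring. }
  set (d0 := (D * S q / Q)%nat). set (d1 := (D * q / (2 * Q))%nat).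
  assert (hg1 : g (S q) = (2 * B + d0)%nat).
  { unfold g, interpolating_path, d0, Q, B. rewrite Nat.pow_succ_r'. ring. }
  assert (hg0 : g q = (B + d1)%nat).
  { unfold g, interpolating_path, d1, B. rewrite hQ2. reflexivity. }
  pose proof (Nat.div_mod (D * S q) Q ltac:(lia)) as E0.
  pose proof (Nat.mod_upper_bound (D * S q) Q ltac:(lia)).
  pose proof (Nat.div_mod (D * q) (2 * Q) ltac:(lia)) as E1.
  pose proof (Nat.mod_upper_bound (D * q) (2 * Q) ltac:(lia)).
  fold d0 in E0. fold d1 in E1.
  set (r0 := ((D * S q) mod Q)%nat) in *. set (r1 := ((D * q) mod (2 * Q))%nat) in *.
  assert (hd01 : (2 * d1 <= d0)%nat).
  { assert (Q * (2 * d1) < Q * (d0 + 1))%nat by nia. nia. }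
  assert (hd0 : (J * d0 < 2 * J * d1 + 2 * J + 2 * B)%nat).
  { assert (Q * d0 < 2 * Q * d1 + 2 * Q + D)%nat by nia.
    assert (J * D < 2 * B * Q)%nat by nia.
    assert (Q * (J * d0) < Q * (2 * J * d1 + 2 * J + 2 * B))%nat by nia. nia. }
  rewrite hg0, hg1. nia.
Qed.

Section RestrictedSubadditivity.

Variables (mu : R) (N : nat) (a : nat -> R).
Hypothesis hmu : 1 < mu.
Hypothesis hN : (1 <= N)%nat.
Hypothesis hsub : forall n m : nat, (N <= n)%nat -> (n <= m)%nat -> INR m <= mu * INR n ->
  a (n + m)%nat <= a n + a m.

Lemma pow2_mul_le (k u : nat) : (N <= k)%nat -> a (2^u * k)%nat <= 2^u * a k.
Proof.
  intro hk. induction u as [|u IH].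
  - simpl. rewrite Nat.add_0_r. lra.
  - replace (2^S u * k)%nat with (2^u * k + 2^u * k)%nat by (rewrite Nat.pow_succ_r'; ring).
    pose proof (Nat.pow_nonzero 2 u ltac:(lia)).
    assert (h := hsub (2^u * k) (2^u * k) ltac:(nia) (le_n _)).
    pose proof (pos_INR (2^u * k)). simpl pow. nra.
Qed.

Lemma linear_upper_bound : exists C, 0 <= C /\ forall m, (N <= m)%nat -> a m <= C * INR m.
Proof.
  destruct (exists_nat_mul_ge 1 (mu - 1) ltac:(lra)) as [K [hK1 hK]].
  set (M0 := (2 * N + 2 * K)%nat).
  destruct (bounded_on_initial_segment a M0) as [C [hC0 hC]].
  exists C. split; [exact hC0|].
  intro m. induction m as [m IH] using (well_founded_induction Wf_nat.lt_wf). intro hm.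
  assert (hm1 : 1 <= INR m) by (apply (le_INR 1); lia).
  destruct (Nat.lt_ge_cases m M0) as [hlt|hge].
  - specialize (hC m ltac:(lia)). nra.
  - set (h := (m / 2)%nat). set (m2 := (m - h)%nat).
    pose proof (Nat.div_mod m 2). pose proof (Nat.mod_upper_bound m 2).
    assert (hhK : (N + K <= h)%nat) by (unfold h, M0 in *; lia).
    assert (hm2 : (h <= m2 <= h + 1)%nat) by (unfold m2, h; lia).
    assert (hratio : INR m2 <= mu * INR h).
    { assert (INR m2 <= INR h + 1) by (rewrite <- S_INR; apply le_INR; lia).
      assert (INR K <= INR h) by (apply le_INR; lia). nra. }
    assert (hs := hsub h m2 ltac:(lia) ltac:(lia) hratio).
    replace (h + m2)%nat with m in hs by (unfold m2; lia).
    assert (Ih := IH h ltac:(lia) ltac:(lia)). assert (Im2 := IH m2 ltac:(lia) ltac:(lia)).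
    replace m with (h + m2)%nat at 2 by (unfold m2; lia). rewrite plus_INR. lra.
Qed.

Lemma path_bound (g : nat -> nat) (J P : nat) (beta : R) :
  (forall m, (P <= m)%nat -> a m <= beta * INR m) ->
  (forall q, (q < J)%nat ->
     (N <= g q)%nat /\ (P <= g q)%nat /\ (2 * g q <= g (S q))%nat /\
     INR (g (S q)) <= (1 + mu) * INR (g q)) ->
  a (g J) <= a (g 0%nat) + beta * (INR (g J) - INR (g 0%nat)).
Proof.
  intros hP hstep.
  enough (H : forall q, (q <= J)%nat -> a (g q) <= a (g 0%nat) + beta * (INR (g q) - INR (g 0%nat)))
    by exact (H J (le_n J)).
  induction q as [|q IH]; intro hq; [lra|].
  destruct (hstep q ltac:(lia)) as [hNq [hPq [hdbl hmul]]].
  set (y := (g (S q) - g q)%nat).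
  assert (hy : INR y = INR (g (S q)) - INR (g q)) by (unfold y; rewrite minus_INR; [ring | lia]).
  assert (hs := hsub (g q) y hNq ltac:(unfold y; lia) ltac:(lra)).
  replace (g q + y)%nat with (g (S q)) in hs by (unfold y; lia).
  assert (hay := hP y ltac:(unfold y; lia)). rewrite hy in hay.
  specialize (IH ltac:(lia)). nra.
Qed.

Lemma interpolating_path_ratio (T D J q : nat) :
  4 <= INR J * (mu - 1) -> 4 <= INR T * (mu - 1) -> (q < J)%nat -> (D < 2^J * T)%nat ->
  INR (interpolating_path T D J (S q)) <= (1 + mu) * INR (interpolating_path T D J q).
Proof.
  intros hJ hT hq hD.
  destruct (interpolating_path_step T D J q hq hD) as [_ hlt].
  set (g := interpolating_path T D J) in *.
  assert (hTg : INR T <= INR (g q)).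
  { apply le_INR. pose proof (interpolating_path_ge T D J q) as hge.
    pose proof (Nat.pow_nonzero 2 q ltac:(lia)). fold g in hge. nia. }
  apply lt_INR in hlt. rewrite !plus_INR, !mult_INR in hlt. simpl (INR 2) in hlt.
  assert (hJ0 : 0 < INR J) by nra.
  assert (hg4 : 4 <= INR (g q) * (mu - 1)) by nra.
  assert (INR J * (mu - 1) * INR (g q) >= 2 * INR (g q) + 2 * INR J) by nra.
  apply (Rmult_le_reg_l (INR J)); nra.
Qed.

Lemma near_doubling_bound (J T D P : nat) (beta : R) :
  (1 <= J)%nat -> 4 <= INR J * (mu - 1) -> 4 <= INR T * (mu - 1) ->
  (N <= T)%nat -> (P <= T)%nat -> (D < 2^J * T)%nat ->
  (forall m, (P <= m)%nat -> a m <= beta * INR m) ->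
  a (2^J * T + D)%nat <= a T + beta * (INR (2^J * T + D) - INR T).
Proof.
  intros hJ1 hJ hT hNT hPT hD hP.
  assert (hpath := path_bound (interpolating_path T D J) J P beta hP).
  rewrite interpolating_path_last, interpolating_path_0 in hpath by exact hJ1.
  apply hpath. intros q hq.
  pose proof (interpolating_path_ge T D J q). pose proof (Nat.pow_nonzero 2 q ltac:(lia)).
  split; [nia | split; [nia | split; [apply interpolating_path_step; lia |]]].
  apply interpolating_path_ratio; lia || lra.
Qed.

Lemma upper_slope_contract (k K P : nat) (beta : R) :
  (N <= k)%nat -> (1 <= K)%nat -> 4 <= INR K * (mu - 1) ->
  a k / INR k <= beta -> (forall m, (P <= m)%nat -> a m <= beta * INR m) ->
  exists P', forall n, (P' <= n)%nat ->
    a n <= (a k / INR k + (beta - a k / INR k) * (1 - / 2^(S K))) * INR n.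
Proof.
  intros hk hK1 hK hbeta hP.
  set (t0 := (P + K + N)%nat). set (T0 := (2^t0 * k)%nat).
  pose proof (Nat.pow_gt_lin_r 2 t0 ltac:(lia)). pose proof (Nat.pow_nonzero 2 K ltac:(lia)).
  assert (ht0 : (t0 <= T0)%nat) by (unfold T0; nia).
  exists (2^K * T0)%nat. intros n hn.
  destruct (pow2_bracket (2^K * T0) n ltac:(unfold t0 in *; nia) hn) as [s hs].
  set (T := (2^s * T0)%nat).
  replace (2^s * (2^K * T0))%nat with (2^K * T)%nat in hs by (unfold T; ring).
  pose proof (Nat.pow_nonzero 2 s ltac:(lia)).
  assert (hT0T : (T0 <= T)%nat) by (unfold T; nia).
  set (D := (n - 2^K * T)%nat).
  assert (hnD : n = (2^K * T + D)%nat) by (unfold D; lia).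
  assert (hT : 4 <= INR T * (mu - 1)).
  { assert (INR K <= INR T) by (apply le_INR; unfold t0 in *; lia). nra. }
  assert (hpath := near_doubling_bound K T D P beta hK1 hK hT
                     ltac:(unfold t0 in *; lia) ltac:(unfold t0 in *; lia) ltac:(unfold D; lia) hP).
  rewrite <- hnD in hpath.
  assert (hk0 : 0 < INR k) by (apply (lt_INR 0); lia).
  assert (haT : a T <= a k / INR k * INR T).
  { replace T with (2^(s + t0) * k)%nat by (unfold T, T0; rewrite Nat.pow_add_r; ring).
    rewrite INR_pow2_mul.
    replace (a k / INR k * (2^(s + t0) * INR k)) with (2^(s + t0) * a k) by (field; lra).
    now apply pow2_mul_le. }
  assert (h2K : 0 < 2^(S K)) by (apply pow_lt; lra).
  assert (hnT : / 2^(S K) * INR n <= INR T).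
  { assert (Hl := lt_INR _ _ (proj2 hs)). rewrite mult_INR, INR_pow2_mul in Hl.
    simpl (INR 2) in Hl.
    apply (Rmult_le_reg_l (2^(S K))); [exact h2K|].
    rewrite <- Rmult_assoc, Rinv_r by lra. simpl pow. lra. }
  set (alpha := a k / INR k) in *. set (c := / 2^(S K)) in *.
  assert ((beta - alpha) * (c * INR n) <= (beta - alpha) * INR T) by (apply Rmult_le_compat_l; lra).
  nra.
Qed.

Lemma upper_slope_iterate (k K : nat) (C : R) :
  (N <= k)%nat -> (1 <= K)%nat -> 4 <= INR K * (mu - 1) ->
  a k / INR k <= C -> (forall m, (N <= m)%nat -> a m <= C * INR m) ->
  forall r, exists P, forall m, (P <= m)%nat ->
    a m <= (a k / INR k + (C - a k / INR k) * (1 - / 2^(S K))^r) * INR m.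
Proof.
  intros hk hK1 hK hCalpha hC r.
  set (alpha := a k / INR k) in *. set (c := / 2^(S K)).
  assert (h2K : 1 < 2^(S K)) by (apply Rlt_pow_R1; [lra | lia]).
  assert (hc1 : c < 1) by (unfold c; rewrite <- Rinv_1; apply Rinv_lt_contravar; lra).
  induction r as [|r [P hP]].
  - exists N. intros m hm. simpl. replace (alpha + (C - alpha) * 1) with C by ring. auto.
  - assert (0 <= (1 - c)^r) by (apply pow_le; lra).
    assert (hbeta : alpha <= alpha + (C - alpha) * (1 - c)^r) by nra.
    destruct (upper_slope_contract k K P _ hk hK1 hK hbeta hP) as [P' hP'].
    exists P'. intros m hm. specialize (hP' m hm). fold alpha c in hP'.
    replace (alpha + (C - alpha) * (1 - c)^S r)
      with (alpha + (alpha + (C - alpha) * (1 - c)^r - alpha) * (1 - c)) by (simpl; ring).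
    exact hP'.
Qed.

Lemma ratio_eventually_le (k : nat) (eta : R) :
  (N <= k)%nat -> 0 < eta -> exists P, forall n, (P <= n)%nat -> a n / INR n <= a k / INR k + eta.
Proof.
  intros hk heta.
  destruct linear_upper_bound as [C0 [_ hC0]].
  set (alpha := a k / INR k). set (C := Rmax C0 alpha).
  assert (hCalpha : alpha <= C) by apply Rmax_r.
  assert (hC : forall m, (N <= m)%nat -> a m <= C * INR m).
  { intros m hm. specialize (hC0 m hm). pose proof (pos_INR m). pose proof (Rmax_l C0 alpha).
    unfold C. nra. }
  destruct (exists_nat_mul_ge 4 (mu - 1) ltac:(lra)) as [K [hK1 hK]].
  set (c := / 2^(S K)).
  assert (h2K : 1 < 2^(S K)) by (apply Rlt_pow_R1; [lra | lia]).
  assert (hc0 : 0 < c) by (apply Rinv_0_lt_compat; lra).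
  assert (hc1 : c < 1) by (unfold c; rewrite <- Rinv_1; apply Rinv_lt_contravar; lra).
  destruct (pow_lt_1_zero (1 - c) ltac:(rewrite Rabs_right; lra) (eta / (C - alpha + 1)))
    as [r hr]; [apply Rdiv_lt_0_compat; lra|].
  specialize (hr r (le_n r)). rewrite Rabs_right in hr by (apply Rle_ge, pow_le; lra).
  assert (hsmall : (C - alpha) * (1 - c)^r <= eta).
  { apply (Rmult_lt_compat_r (C - alpha + 1)) in hr; [|lra].
    unfold Rdiv in hr. rewrite Rmult_assoc, Rinv_l in hr by lra.
    assert (0 <= (1 - c)^r) by (apply pow_le; lra). nra. }
  destruct (upper_slope_iterate k K C hk hK1 hK hCalpha hC r) as [P hP].
  exists (Nat.max P 1). intros n hn.
  specialize (hP n ltac:(lia)). fold alpha c in hP.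
  assert (hn0 : 0 < INR n) by (apply (lt_INR 0); lia).
  apply (Rmult_le_reg_r (INR n)); [exact hn0|].
  unfold Rdiv. rewrite Rmult_assoc, Rinv_l by lra. nra.
Qed.

End RestrictedSubadditivity.

Lemma is_inf_ratio_exists (a : nat -> R) (N : nat) :
  (exists l, forall k, (N <= k)%nat -> l <= a k / INR k) -> exists L, is_inf_ratio a N L.
Proof.
  intros [l hl].
  set (E := fun x => exists k, (N <= k)%nat /\ x = - (a k / INR k)).
  assert (hbound : bound E).
  { exists (- l). intros x [k [hk ->]]. specialize (hl k hk). lra. }
  assert (hne : exists x, E x) by (exists (- (a N / INR N)), N; split; [lia | reflexivity]).
  destruct (completeness E hbound hne) as [m [hub hlub]].
  exists (- m). split.
  - intros k hk. assert (hE : E (- (a k / INR k))) by (exists k; auto).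
    specialize (hub _ hE). lra.
  - intros l' hl'. enough (m <= - l') by lra.
    apply hlub. intros x [k [hk ->]]. specialize (hl' k hk). lra.
Qed.

Lemma is_inf_ratio_approx (a : nat -> R) (N : nat) (L eps : R) :
  is_inf_ratio a N L -> 0 < eps -> exists k, (N <= k)%nat /\ a k / INR k < L + eps.
Proof.
  intros [_ hglb] heps. apply NNPP. intro hno.
  enough (L + eps <= L) by lra.
  apply hglb. intros k hk. apply Rnot_lt_le. intro hlt. apply hno. exists k. auto.
Qed.

Lemma inf_ratio_minus_infty_of_unbounded (a : nat -> R) (N : nat) :
  ~ (exists l, forall k, (N <= k)%nat -> l <= a k / INR k) -> inf_ratio_minus_infty a N.
Proof.
  intros hnb l. apply NNPP. intro hno. apply hnb. exists l. intros k hk.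
  apply Rnot_lt_le. intro hlt. apply hno. exists k. auto.
Qed.

Theorem theorem3p2 (mu : R) (N : nat) (a : nat -> R)
  (hmu : 1 < mu) (hN : (1 <= N)%nat)
  (hsub : forall n m : nat, (N <= n)%nat -> (n <= m)%nat -> INR m <= mu * INR n ->
            a (n + m)%nat <= a n + a m) :
  (exists L : R, is_inf_ratio a N L /\ Un_cv (fun n => a n / INR n) L) \/
  (inf_ratio_minus_infty a N /\ cv_infty (fun n => - (a n / INR n))).
Proof.
  destruct (classic (exists l, forall k, (N <= k)%nat -> l <= a k / INR k)) as [hbd|hnb].
  - left. destruct (is_inf_ratio_exists a N hbd) as [L hL].
    exists L. split; [exact hL|].
    intros eps heps.
    destruct (is_inf_ratio_approx a N L (eps / 2) hL ltac:(lra)) as [k [hk hkL]].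
    destruct (ratio_eventually_le mu N a hmu hN hsub k (eps / 2) hk ltac:(lra)) as [P hP].
    exists (Nat.max P N). intros n hn.
    specialize (hP n ltac:(lia)). pose proof (proj1 hL n ltac:(lia)).
    unfold Rdist. rewrite Rabs_right by lra. lra.
  - right. pose proof (inf_ratio_minus_infty_of_unbounded a N hnb) as hinf.
    split; [exact hinf|].
    intro M. destruct (hinf (- M - 1)) as [k [hk hkM]].
    destruct (ratio_eventually_le mu N a hmu hN hsub k (1 / 2) hk ltac:(lra)) as [P hP].
    exists P. intros n hn. specialize (hP n hn). lra.
Qed.
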